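(* Consider a slotted system with diversity. There are $N$ users, $N_{sub}\ge2$ sub-carriers and slots $1,\dots,T$. In every slot, independently, the BS chooses a user uniformly at random among the $N$ users and a sub-carrier uniformly at random among the $N_{sub}$ sub-carriers, and sends an update to the chosen user on the chosen sub-carrier. The adversary uses a blocking matrix $\sigma\in\{0,1\}^{N_{sub}\times T}$, where $\sigma_j(t)=0$ means sub-carrier $j$ is blocked in slot $t$. Feasibility means $\sum_{j,t}(1-\sigma_j(t))\le\alpha T$ and at most one sub-carrier is blocked per slot, where $0<\alpha<1$ and $\alpha T\in\mathbb Z$. Ages satisfy $a_i(1)=1$. Also $a_i(t+1)=1$ if user $i$ is chosen in slot $t$ and the chosen sub-carrier is not blocked in slot $t$, and $a_i(t+1)=a_i(t)+1$ otherwise. The average age is $\Delta^{\sigma}=\frac1T\sum_{t=1}^T\frac1N\sum_i\mathbb E[a_i(t)]$. Then there exists a maximizer of $\Delta^\sigma$ over feasible $\sigma$ that blocks a single sub-carrier in exactly $\alpha T$ consecutive slots and blocks nothing else. *)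

From HB Require Import structures.
From mathcomp Require Import all_boot all_order all_algebra.
Set Implicit Arguments. Unset Strict Implicit. Unset Printing Implicit Defensive.
Import Order.TTheory GRing.Theory Num.Theory.
Local Open Scope ring_scope.

(* Slots are 0-based: slot t (paper) is index t-1 : 'I_T.
   A blocking matrix sigma : 'M[bool]_(Nsub, T); sigma j t = false means
   sub-carrier j is blocked in slot t (paper's sigma_j(t) = 0). *)

Definition outcome (N Nsub T : nat) := {ffun 'I_T -> 'I_N * 'I_Nsub}.

(* age N Nsub T sigma w i k = a_i(k+1) on outcome w. *)
Fixpoint age (N Nsub T : nat) (sigma : 'M[bool]_(Nsub, T))
  (w : outcome N Nsub T) (i : 'I_N) (k : nat) : nat :=
  match k with
  | 0 => 1
  | k'.+1 =>
      match insub k' : option 'I_T with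
      | Some t => if ((w t).1 == i) && sigma (w t).2 t then 1
                  else (age sigma w i k').+1
      | None => (age sigma w i k').+1
      end
  end.

(* Expectation under the uniform (independent uniform user and uniform
   sub-carrier in each slot) distribution on outcomes. *)
Definition expect (R : realFieldType) (N Nsub T : nat)
  (X : outcome N Nsub T -> R) : R :=
  (\sum_(w : outcome N Nsub T) X w) / (#|{: outcome N Nsub T}|)%:R.

Arguments expect : clear implicits.
Arguments expect R {N Nsub T}.
Definition avg_age (R : realFieldType) (N Nsub T : nat)
  (sigma : 'M[bool]_(Nsub, T)) : R :=
  T%:R^-1 * \sum_(t < T) (N%:R^-1 *
     \sum_(i < N) expect R (fun w => (age sigma w i t)%:R)).

Definition nblocked (Nsub T : nat) (sigma : 'M[bool]_(Nsub, T)) : nat :=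
  #|[set jt : 'I_Nsub * 'I_T | ~~ sigma jt.1 jt.2]|.

Definition feasible (R : realFieldType) (Nsub T : nat) (alpha : R)
  (sigma : 'M[bool]_(Nsub, T)) : Prop :=
  (nblocked sigma)%:R <= alpha * T%:R /\
  forall t : 'I_T, (#|[set j : 'I_Nsub | ~~ sigma j t]| <= 1)%N.

Definition consecutive_block (Nsub T : nat) (sigma : 'M[bool]_(Nsub, T))
  (K : nat) : Prop :=
  exists (j : 'I_Nsub) (t0 : nat), (t0 + K <= T)%N /\
    forall (j' : 'I_Nsub) (t : 'I_T),
      sigma j' t = ~~ ((j' == j) && (t0 <= t < t0 + K)%N).
Arguments avg_age R N {Nsub T}.

(* In a slot where one sub-carrier is blocked a fixed user keeps its age with
   probability y = 1 - (N_sub - 1) / (N N_sub), in a free slot with probability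
   x = 1 - 1 / N <= y, independently over slots.  Hence
   E[a_i(k+1)] = 1 + sum_(l < k) prod_(l <= s < k) d_s, and the average age is
   (T + F(d)) / T with F(d) = sum_(0 <= l < k <= T-1) prod_(l <= s < k) d_s,
   where d_s is x or y according to whether slot s is blocked.  So it suffices
   to show that among blocked sets B of a given size F is maximal on an
   interval.  Let [a, b) be the leftmost run of B.  If a + b + 1 < T - 1,
   unblocking a and blocking b does not decrease F: an interval containing a
   but not b is paired with its mirror image about (a + b) / 2, which contains
   b but not a and, B being heavier to the right of a, carries a larger product
   of the other factors.  The move brings B closer to the centre of the
   horizon; if it is impossible both for B and for its mirror image, then B
   is a single run. *)

From HB Require Import structures.
From mathcomp Require Import all_boot all_order all_algebra.
From mathcomp Require Import ring lra zify.
Set Implicit Arguments. Unset Strict Implicit. Unset Printing Implicit Defensive.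
Import Order.TTheory GRing.Theory Num.Theory.

Lemma big_nat_mirror (V : Type) (idx : V) (op : Monoid.com_law idx)
    (F : nat -> V) c l k :
  l <= k <= c ->
  \big[op/idx]_(c - k <= j < c - l) F j = \big[op/idx]_(l <= i < k) F (c.-1 - i).
Proof.
move=> /andP[lk kc].
rewrite -{1}(add0n (c - k)) big_addn -{2}(add0n l) big_addn big_nat_rev /=.
have -> : c - l - (c - k) = k - l by lia.
by apply: eq_big_nat => i /andP[_ ik]; congr F; lia.
Qed.

Lemma big_nat_insub (V : Type) (idx : V) (op : Monoid.law idx) T (f : 'I_T -> V) l k :
  k <= T ->
  \big[op/idx]_(l <= s < k) oapp f idx (insub s) =
  \big[op/idx]_(t : 'I_T | l <= t < k) f t.
Proof.
move=> kT; rewrite (eq_bigr (fun t : 'I_T => oapp f idx (insub (val t)))); last first.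
  by move=> t _; rewrite valK.
rewrite -(big_mkord (fun s => l <= s < k) (fun s => oapp f idx (insub s))).
by rewrite (big_nat_widenl _ 0) // (big_nat_widen _ _ T).
Qed.

Definition swapn a b s : nat := if s == a then b else if s == b then a else s.

Definition rev_pred n (B : pred nat) : pred nat := fun s => (s < n) && B (n.-1 - s).

Definition weight n (g : nat -> nat) (B : pred nat) : nat := \sum_(s < n) B s * g s.

(* |2s + 1 - n|, twice the distance from s to the centre of [0, n). *)
Definition center_dist n s : nat := (2 * s + 1 - n) + (n - (2 * s + 1)).

Lemma weight_swapn n (g : nat -> nat) (B : pred nat) a b :
  a < n -> b < n -> B a -> ~~ B b ->
  weight n g (B \o swapn a b) + g a = weight n g B + g b.
Proof.
move=> an bn Ba nBb; have a_neq_b : a != b by apply: contraTneq Ba => ->.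
have pick c : c < n -> \sum_(s < n) (s == c :> nat) * g s = g c.
  move=> cn; rewrite (eq_bigr (fun s : 'I_n => if s == c :> nat then g s else 0)).
    by rewrite -big_mkcond big_ord1_eq cn.
  by move=> s _; case: eqP; rewrite ?mul1n ?mul0n.
rewrite -{1}(pick a an) -(pick b bn) /weight -!big_split /=.
apply: eq_bigr => s _; rewrite /swapn.
case: (eqVneq (s : nat) a) => [->|sa]; first by rewrite Ba (negbTE a_neq_b) /=; lia.
by case: (eqVneq (s : nat) b) => [->|sb] /=; [rewrite (negbTE nBb) | ]; lia.
Qed.

Lemma weight_rev n (g : nat -> nat) (B : pred nat) :
  (forall s, s < n -> g (n.-1 - s) = g s) -> weight n g (rev_pred n B) = weight n g B.
Proof.
move=> g_sym; rewrite /weight (reindex_inj rev_ord_inj) /=.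
apply: eq_bigr => s _; have := ltn_ord s => sn.
rewrite /rev_pred (_ : n - s.+1 < n) /=; last by lia.
have -> : n.-1 - (n - s.+1) = s by lia.
by rewrite (_ : n - s.+1 = n.-1 - s) ?g_sym //; lia.
Qed.

Lemma weight_interval n a b :
  a <= b <= n -> weight n (fun=> 1) (fun s => a <= s < b) = b - a.
Proof.
suff -> : weight n (fun=> 1) (fun s => a <= s < b) = minn b n - minn a n by lia.
elim: n => [|n IH]; first by rewrite /weight big_ord0; lia.
rewrite /weight big_ord_recr /=; rewrite /weight in IH; rewrite IH.
by case: (boolP (a <= n < b)) => /= hn; lia.
Qed.

Definition leftmost_run (B : pred nat) a b :=
  [/\ a < b, forall s, s < a -> ~~ B s, forall s, a <= s < b -> B s & ~~ B b].

Lemma exists_leftmost_run n (B : pred nat) :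
  (forall s, B s -> s < n) -> (exists s, B s) ->
  exists a b, b <= n /\ leftmost_run B a b.
Proof.
move=> supp exB; have [a Ba a_min] := ex_minnP exB.
have nBn : ~~ B n by apply: contraL isT => /supp; rewrite ltnn.
have an := supp a Ba.
have exnB : exists s, (a <= s) && ~~ B s by exists n; rewrite nBn andbT ltnW.
have [b /andP[ab nBb] b_min] := ex_minnP exnB.
exists a, b; split; first by apply: b_min; rewrite nBn andbT ltnW.
split => //.
- by rewrite ltn_neqAle ab andbT; apply: contraNneq nBb => <-.
- by move=> s sa; apply: contraL sa => /a_min; lia.
- move=> s /andP[hs sb]; apply: contraLR sb => nBs.
  by rewrite -leqNgt; apply: b_min; rewrite hs.
Qed.

Lemma leftmost_runs_interval n (B : pred nat) a b a' b' :
  (forall s, B s -> s < n) -> leftmost_run B a b ->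
  leftmost_run (rev_pred n B) a' b' -> n < a + b + 2 -> n < a' + b' + 2 ->
  B =1 (fun s => a <= s < b).
Proof.
move=> supp [ab below inside nBb] [ab' below' inside' _] abn abn' s.
have [/below/negbTE -> | le_as] := ltnP s a; first by lia.
have [lt_sb | le_bs] := ltnP s b; first by rewrite inside; lia.
rewrite andbF; apply/negbTE/negP => Bs; have sn := supp s Bs.
have s_neq_b : s != b by apply: contraNneq nBb => <-.
have rev_s : rev_pred n B (n.-1 - s).
  by rewrite /rev_pred (_ : n.-1 - (n.-1 - s) = s) ?Bs ?andbT; lia.
have nrev_b : ~~ rev_pred n B (n.-1 - b).
  by rewrite /rev_pred (_ : n.-1 - (n.-1 - b) = b) ?(negbTE nBb) ?andbF; lia.
have le_a's : a' <= n.-1 - s by rewrite leqNgt; apply/negP => /below'; rewrite rev_s.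
have le_b'b : b' <= n.-1 - b.
  by rewrite leqNgt; apply/negP => lt; move: nrev_b; rewrite inside' //; lia.
lia.
Qed.

Local Open Scope ring_scope.

Lemma sumr_ge0_involutive (R : numDomainType) (I : finType) (phi : I -> I)
    (f : I -> R) :
  involutive phi -> (forall i, 0 <= f i + f (phi i)) -> 0 <= \sum_i f i.
Proof.
move=> phiK hf.
have fphiE : \sum_i f (phi i) = \sum_i f i.
  by rewrite [RHS](reindex_inj (inv_inj phiK)).
have : 0 <= \sum_i (f i + f (phi i)) by exact: sumr_ge0.
by rewrite big_split /= fphiE -mulr2n pmulrn_lge0.
Qed.

Section IntervalProdSum.
Variable R : realFieldType.
Implicit Types d : nat -> R.

Definition interval_prod_sum n d : R :=
  \sum_(k < n.+1) \sum_(l < k) \prod_(l <= s < k) d s.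

Lemma interval_prod_sum_pairs n d :
  interval_prod_sum n d = \sum_(p : 'I_n.+1 * 'I_n.+1)
    (if (p.1 < p.2)%N then \prod_(p.1 <= s < p.2) d s else 0).
Proof.
rewrite -(pair_bigA _ (fun l k : 'I_n.+1 =>
  if (l < k)%N then \prod_(l <= s < k) d s else 0)) exchange_big.
apply: eq_bigr => k _ /=.
rewrite (big_ord_widen n.+1 (fun l => \prod_(l <= s < k) d s)) ?big_mkcond //.
exact: ltnW.
Qed.

Lemma eq_interval_prod_sum n d d' :
  (forall s, (s < n)%N -> d s = d' s) ->
  interval_prod_sum n d = interval_prod_sum n d'.
Proof.
move=> dd'; apply: eq_bigr => k _; apply: eq_bigr => l _.
by apply: eq_big_nat => s /andP[_ sk]; apply: dd'; have := ltn_ord k; lia.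
Qed.

Lemma ler_interval_prod_sum n d d' :
  (forall s, 0 <= d s <= d' s) ->
  interval_prod_sum n d <= interval_prod_sum n d'.
Proof.
move=> dd'; apply: ler_sum => k _; apply: ler_sum => l _.
by apply: ler_prod => s _; apply: dd'.
Qed.

Lemma interval_prod_sum_rev n d :
  interval_prod_sum n d = interval_prod_sum n (fun s => d (n.-1 - s)%N).
Proof.
rewrite !interval_prod_sum_pairs.
pose mirror (p : 'I_n.+1 * 'I_n.+1) : 'I_n.+1 * 'I_n.+1 :=
  (inord (n - p.2), inord (n - p.1)).
have mirrorK : involutive mirror.
  move=> [l k]; have := ltn_ord l; have := ltn_ord k => kn ln.
  by congr pair; apply: val_inj; rewrite /= !inordK; lia.
rewrite [RHS](reindex_inj (inv_inj mirrorK)); apply: eq_bigr => -[l k] _ /=.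
have := ltn_ord l; have := ltn_ord k => kn ln.
rewrite !inordK; try lia.
have -> : (n - k < n - l)%N = (l < k)%N by lia.
case: ifP => // lk; rewrite big_nat_mirror; last by lia.
by apply: eq_big_nat => i /andP[_ ik]; congr d; lia.
Qed.

Lemma prod_split2 (f : nat -> R) a b l k : a != b ->
  \prod_(l <= s < k) f s =
  (if (l <= a < k)%N then f a else 1) * (if (l <= b < k)%N then f b else 1) *
  \prod_(l <= s < k | (s != a) && (s != b)) f s.
Proof.
move=> ab.
have prod1 (s0 : nat) (v : R) : \prod_(l <= s < k) (if s == s0 then v else 1) =
                  (if (l <= s0 < k)%N then v else 1).
  by rewrite -big_mkcond big_nat1_eq.
rewrite -!prod1 (big_mkcond (fun s => (s != a) && (s != b))) -!big_split /=.
apply: eq_bigr => s _.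
case: (eqVneq s a) => [->|sa]; first by rewrite (negbTE ab) !mulr1.
by case: (eqVneq s b) => [->|sb] /=; rewrite !mul1r ?mulr1.
Qed.

Lemma prod_swapnB d a b l k : a != b ->
  \prod_(l <= s < k) d (swapn a b s) - \prod_(l <= s < k) d s =
  (((l <= b < k)%N)%:R - ((l <= a < k)%N)%:R) * (d a - d b) *
  \prod_(l <= s < k | (s != a) && (s != b)) d s.
Proof.
move=> ab; rewrite !(prod_split2 _ _ _ ab).
have -> : \prod_(l <= s < k | (s != a) && (s != b)) d (swapn a b s) =
          \prod_(l <= s < k | (s != a) && (s != b)) d s.
  by apply: eq_bigr => s /andP[/negbTE sa /negbTE sb]; rewrite /swapn sa sb.
rewrite /swapn eqxx eq_sym (negbTE ab) eqxx.
by case: (l <= a < k)%N; case: (l <= b < k)%N => /=; ring.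
Qed.

Lemma prod_except2_mirror d a b l k :
  (forall s, 0 <= d s) ->
  (forall s, (s < b)%N -> s != a -> d s <= d (a + b - s)%N) ->
  (l <= a < k)%N -> (k <= b)%N ->
  \prod_(l <= s < k | (s != a) && (s != b)) d s <=
  \prod_((a + b + 1 - k)%N <= s < (a + b + 1 - l)%N | (s != a) && (s != b)) d s.
Proof.
move=> d0 dmir /andP[la ak] kb.
rewrite !(big_mkcond (fun s => (s != a) && (s != b))) big_nat_mirror; last by lia.
rewrite [X in X <= _]big_nat_cond [X in _ <= X]big_nat_cond.
apply: ler_prod => s /andP[/andP[ls sk] _].
have -> : ((a + b + 1).-1 - s = a + b - s)%N by lia.
case: (eqVneq s a) => [->|sa].
  by rewrite (_ : (a + b - a)%N = b) ?eqxx ?andbF ?lexx ?ler01 //; lia.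
have -> : s != b by lia.
have -> : (a + b - s)%N != a by lia.
have -> : (a + b - s)%N != b by lia.
by rewrite d0 dmir //; lia.
Qed.

Lemma sum_pairs_mirror_ge0 n a b (g : nat -> nat -> R) :
  (a + b + 1 <= n)%N ->
  (forall l k, ~~ [&& l <= a, a < k & k <= b]%N -> 0 <= g l k) ->
  (forall l k, [&& l <= a, a < k & k <= b]%N ->
     0 <= g l k + g (a + b + 1 - k)%N (a + b + 1 - l)%N) ->
  0 <= \sum_(p : 'I_n.+1 * 'I_n.+1) g p.1 p.2.
Proof.
move=> cn g0 gmir; set c := (a + b + 1)%N.
pose lower l k := [&& l <= a, a < k & k <= b]%N.
pose upper l k := [&& a < l, l <= b, b < k & k <= c]%N.
pose mirror (p : 'I_n.+1 * 'I_n.+1) : 'I_n.+1 * 'I_n.+1 :=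
  if lower p.1 p.2 || upper p.1 p.2 then (inord (c - p.2), inord (c - p.1)) else p.
apply: (@sumr_ge0_involutive _ _ mirror) => -[l k]; rewrite /mirror /=.
  case lu: (lower l k || upper l k) => /=; last by rewrite lu.
  have [lc kc] : (l <= c /\ k <= c)%N by move: lu; rewrite /lower /upper; lia.
  rewrite !inordK; try lia.
  have -> : lower (c - k)%N (c - l)%N || upper (c - k)%N (c - l)%N.
    by move: lu; rewrite /lower /upper /c; lia.
  by congr pair; apply: val_inj; rewrite /= inordK; lia.
case lo: (lower l k) => /=.
  have [lc kc] : (l <= c /\ k <= c)%N by move: lo; rewrite /lower /c; lia.
  by rewrite !inordK; [exact: gmir | lia ..].
case up: (upper l k) => /=; last by apply: addr_ge0; exact: g0 (negbT lo).
have [lc kc] : (l <= c /\ k <= c)%N by move: up; rewrite /upper; lia.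
rewrite !inordK; try lia.
have := gmir (c - k)%N (c - l)%N; rewrite (_ : (c - (c - l))%N = l); last by lia.
rewrite (_ : (c - (c - k))%N = k); last by lia.
by rewrite addrC; apply; move: up; rewrite /upper /c; lia.
Qed.

Lemma interval_prod_sum_swapn n d a b :
  (a < b)%N -> (a + b + 1 <= n)%N -> (forall s, 0 <= d s) -> d b <= d a ->
  (forall s, (s < b)%N -> s != a -> d s <= d (a + b - s)%N) ->
  interval_prod_sum n d <= interval_prod_sum n (d \o swapn a b).
Proof.
move=> ab cn d0 dba dmir; have a_neq_b : a != b by lia.
pose Q l k := \prod_(l <= s < k | (s != a) && (s != b)) d s.
have Q0 l k : 0 <= Q l k by apply: prodr_ge0.
pose g l k := if (l < k)%N
  then (((l <= b < k)%N)%:R - ((l <= a < k)%N)%:R) * Q l k else 0.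
rewrite -subr_ge0 !interval_prod_sum_pairs -sumrB.
rewrite (eq_bigr (fun p : 'I_n.+1 * 'I_n.+1 => (d a - d b) * g p.1 p.2)); last first.
  move=> [l k] _ /=; rewrite /g; case: ifP => _; last by rewrite subrr mulr0.
  by rewrite prod_swapnB // mulrCA mulrA.
rewrite -mulr_sumr mulr_ge0 ?subr_ge0 //.
apply: (sum_pairs_mirror_ge0 cn) => l k; rewrite /g.
  move=> not_lower; case: ifP => // lk; rewrite mulr_ge0 // subr_ge0 ler_nat.
  case: (boolP (l <= a < k)%N) => //= /andP[la ak].
  by have -> : (l <= b < k)%N by move: not_lower; rewrite la ak /=; lia.
move=> /and3P[la ak kb].
rewrite ifT; last by lia.
rewrite ifT; last by lia.
have -> : (l <= b < k)%N = false by lia.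
have -> : (l <= a < k)%N by lia.
have -> : (a + b + 1 - k <= b < a + b + 1 - l)%N by lia.
have -> : (a + b + 1 - k <= a < a + b + 1 - l)%N = false by lia.
rewrite /= subr0 sub0r mulN1r mul1r addrC subr_ge0.
by apply: prod_except2_mirror => //; lia.
Qed.

End IntervalProdSum.

Section Profiles.
Variable R : realFieldType.
Variables x y : R.
Hypothesis xy : 0 <= x <= y.

Definition profile (B : pred nat) (s : nat) : R := if B s then y else x.

Lemma profile_ge0 B s : 0 <= profile B s.
Proof. by case/andP: xy => x0 xy'; rewrite /profile; case: ifP => _; lra. Qed.

Lemma profile_ge B s : x <= profile B s.
Proof. by case/andP: xy => _ xy'; rewrite /profile; case: ifP. Qed.

Lemma ler_interval_prod_sum_profile n (B B' : pred nat) :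
  (forall s, B s -> B' s) ->
  interval_prod_sum n (profile B) <= interval_prod_sum n (profile B').
Proof.
move=> BB'; apply: ler_interval_prod_sum => s; apply/andP; split; first exact: profile_ge0.
case/andP: xy => _ xy'; rewrite /profile; case Bs: (B s); first by rewrite BB'.
by case: (B' s).
Qed.

Definition improves n (B B' : pred nat) :=
  [/\ forall s, B' s -> (s < n)%N,
      (weight n (center_dist n) B' < weight n (center_dist n) B)%N,
      weight n (fun=> 1%N) B' = weight n (fun=> 1%N) B &
      interval_prod_sum n (profile B) <= interval_prod_sum n (profile B')].

Lemma improves_rev n (B B' : pred nat) :
  (forall s, B s -> (s < n)%N) -> improves n (rev_pred n B) B' -> improves n B B'.
Proof.
move=> supp [supp' lt' cnt' le']; split => //.
- by rewrite -(@weight_rev _ _ B) // => s sn; rewrite /center_dist; lia.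
- by rewrite -(@weight_rev _ _ B).
rewrite interval_prod_sum_rev (@eq_interval_prod_sum _ _ _ (profile (rev_pred n B))) //.
by move=> s sn; rewrite /profile /rev_pred sn.
Qed.

Lemma improves_shift n (B : pred nat) a b :
  (forall s, B s -> (s < n)%N) -> leftmost_run B a b -> (a + b + 2 <= n)%N ->
  improves n B (B \o swapn a b).
Proof.
move=> supp [ab below inside nBb] abn.
have Ba : B a by apply: inside; lia.
have [an bn] : (a < n /\ b < n)%N by lia.
split.
- move=> s; rewrite /= /swapn; case: (eqVneq s a) => [->|_]; first by rewrite (negbTE nBb).
  by case: (eqVneq s b) => [->|_] //; exact: supp.
- by have := weight_swapn (center_dist n) an bn Ba nBb; rewrite /center_dist; lia.
- by have := weight_swapn (fun=> 1%N) an bn Ba nBb; lia.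
apply: interval_prod_sum_swapn => //; first by lia.
- exact: profile_ge0.
- by rewrite /profile Ba (negbTE nBb); case/andP: xy.
move=> s sb sa; rewrite {1}/profile; case: ifP => Bs; last exact: profile_ge.
have lt_as : (a < s)%N by case: (ltnP s a) => [/below|]; [rewrite Bs | lia].
by rewrite /profile inside //; lia.
Qed.

Lemma improve_or_interval n (B : pred nat) :
  (forall s, B s -> (s < n)%N) ->
  (exists B', improves n B B') \/
  exists a b, (a <= b <= n)%N /\ B =1 (fun s => a <= s < b)%N.
Proof.
move=> supp; case: (boolP [exists s : 'I_n, B s]) => [/existsP[s0 Bs0]|/existsPn noB].
  have [a [b [bn run]]] := exists_leftmost_run supp (ex_intro (fun s => B s) _ Bs0).
  have [abn|abn] := leqP (a + b + 2) n.
    by left; exists (B \o swapn a b); apply: improves_shift.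
  have supp_rev s : rev_pred n B s -> (s < n)%N by case/andP.
  have rev_s0 : rev_pred n B (n.-1 - s0)%N.
    have s0n := ltn_ord s0.
    by rewrite /rev_pred (_ : (n.-1 - (n.-1 - s0))%N = s0) ?Bs0 ?andbT; lia.
  have [a' [b' [bn' run']]] :=
    exists_leftmost_run supp_rev (ex_intro (fun s => rev_pred n B s) _ rev_s0).
  have [abn'|abn'] := leqP (a' + b' + 2) n.
    left; exists (rev_pred n B \o swapn a' b').
    by apply: improves_rev => //; apply: improves_shift.
  right; exists a, b; split; first by case: run; lia.
  exact: leftmost_runs_interval run run' abn abn'.
right; exists 0%N, 0%N; split => // s; apply/negbTE/negP => Bs.
by have := noB (Ordinal (supp s Bs)); rewrite /= Bs.
Qed.

Lemma interval_prod_sum_interval_dominates n (B : pred nat) :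
  exists q r, [/\ (q <= r <= n)%N, (r - q <= weight n (fun=> 1%N) B)%N &
    interval_prod_sum n (profile B) <=
    interval_prod_sum n (profile (fun s => q <= s < r)%N)].
Proof.
pose B0 s := (s < n)%N && B s.
have -> : interval_prod_sum n (profile B) = interval_prod_sum n (profile B0).
  by apply: eq_interval_prod_sum => s sn; rewrite /profile /B0 sn.
have -> : weight n (fun=> 1%N) B = weight n (fun=> 1%N) B0.
  by apply: eq_bigr => s _; rewrite /B0 ltn_ord.
have : forall s, B0 s -> (s < n)%N by move=> s /andP[].
have [m] := ubnP (weight n (center_dist n) B0); elim: m B0 => // m IH B0 ltm supp.
case: (improve_or_interval supp) => [[B' [supp' lt' cnt' le']]|[a [b [abn eqB]]]].
  have [q [r [qrn qr le]]] := IH B' (leq_trans lt' (ltnSE ltm)) supp'.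
  by exists q, r; split => //; [rewrite -cnt' | exact: le_trans le' le].
exists a, b; split => //.
  have -> : weight n (fun=> 1%N) B0 = weight n (fun=> 1%N) (fun s => a <= s < b)%N.
    by apply: eq_bigr => s _; rewrite eqB.
  by rewrite weight_interval.
rewrite (@eq_interval_prod_sum _ n _ (profile (fun s => a <= s < b)%N)) //.
by move=> s _; rewrite /profile eqB.
Qed.

End Profiles.

Section Expectation.
Variables (R : realFieldType) (N Nsub T : nat).
Hypotheses (N_gt0 : (0 < N)%N) (Nsub_gt0 : (0 < Nsub)%N).
Implicit Types X Y : outcome N Nsub T -> R.

Lemma card_outcome : #|{: outcome N Nsub T}| = ((N * Nsub) ^ T)%N.
Proof. by rewrite card_ffun card_prod !card_ord. Qed.

Lemma eq_expect X Y : X =1 Y -> expect R X = expect R Y.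
Proof. by move=> XY; rewrite /expect (eq_bigr _ (fun w _ => XY w)). Qed.

Lemma expectD X Y : expect R (fun w => X w + Y w) = expect R X + expect R Y.
Proof. by rewrite /expect big_split mulrDl. Qed.

Lemma expect_sum k (X : 'I_k -> outcome N Nsub T -> R) :
  expect R (fun w => \sum_(l < k) X l w) = \sum_(l < k) expect R (X l).
Proof. by rewrite /expect exchange_big mulr_suml. Qed.

Lemma expect_cst (r : R) : expect R (fun _ : outcome N Nsub T => r) = r.
Proof.
rewrite /expect sumr_const -[r *+ _]mulr_natr mulfK // pnatr_eq0 card_outcome.
by rewrite expn_eq0 negb_and muln_eq0 negb_or -!lt0n N_gt0 Nsub_gt0.
Qed.

Lemma expect_prod (P : pred 'I_T) (F : 'I_T -> 'I_N * 'I_Nsub -> R) :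
  expect R (fun w => \prod_(t | P t) F t (w t)) =
  \prod_(t | P t) ((\sum_a F t a) / (N * Nsub)%:R).
Proof.
rewrite /expect card_outcome; set M : R := (N * Nsub)%:R.
have M_neq0 : M != 0 by rewrite pnatr_eq0 -lt0n muln_gt0 N_gt0.
rewrite (eq_bigr (fun w : outcome N Nsub T => \prod_t (if P t then F t (w t) else 1)));
  last by move=> w _; rewrite big_mkcond.
rewrite -(bigA_distr_bigA (fun t a => if P t then F t a else 1)) /=.
rewrite (eq_bigr (fun t => M * (if P t then (\sum_a F t a) / M else 1))); last first.
  move=> t _; case: (P t); first by rewrite mulrC divfK.
  by rewrite mulr1 sumr_const card_prod !card_ord /M natrM mulr_natr.
rewrite big_split /= prodr_const card_ord natrX -/M [M ^+ T * _]mulrC mulfK ?expf_neq0 //.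
by rewrite -big_mkcond.
Qed.

End Expectation.

Section AverageAge.
Variables (R : realFieldType) (N Nsub T : nat).
Hypotheses (N_gt0 : (0 < N)%N) (Nsub_gt0 : (0 < Nsub)%N).
Variable sigma : 'M[bool]_(Nsub, T).

(* Probability that a given user is not refreshed in a slot with c open
   sub-carriers. *)
Definition stay (c : nat) : R := 1 - c%:R / (N * Nsub)%:R.

Lemma stay_ge0_le c c' : (c' <= c <= N * Nsub)%N -> 0 <= stay c <= stay c'.
Proof.
move=> /andP[c'c cNS]; have NS_gt0 : (0 < N * Nsub)%N by rewrite muln_gt0 N_gt0.
rewrite /stay subr_ge0 ler_pdivrMr ?ltr0n // mul1r ler_nat cNS /= lerD2l lerN2.
by rewrite ler_pM2r ?invr_gt0 ?ltr0n // ler_nat.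
Qed.

Definition hits (i : 'I_N) (t : 'I_T) (a : 'I_N * 'I_Nsub) : bool :=
  (a.1 == i) && sigma a.2 t.

Definition kept (w : outcome N Nsub T) i (s : nat) : R :=
  oapp (fun t => (~~ hits i t (w t))%:R) 1 (insub s).

Definition stay_prob (s : nat) : R :=
  oapp (fun t => stay #|[set j | sigma j t]|) 1 (insub s).

Lemma age_kept w i k :
  (age sigma w i k)%:R = 1 + \sum_(l < k) \prod_(l <= s < k) kept w i s.
Proof.
elim: k => [|k IH]; first by rewrite big_ord0 addr0.
have -> : \sum_(l < k.+1) \prod_(l <= s < k.+1) kept w i s =
          (1 + \sum_(l < k) \prod_(l <= s < k) kept w i s) * kept w i k.
  rewrite big_ord_recr /= big_nat1 mulrDl mul1r addrC mulr_suml.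
  by congr (_ + _); apply: eq_bigr => l _; rewrite big_nat_recr //; exact: ltnW.
rewrite -IH /kept /=; case: (insub k) => [t|] /=; last by rewrite mulr1 -natr1 addrC.
by rewrite /hits; case: ifP => _; rewrite /= ?mulr0 ?addr0 // mulr1 -natr1 addrC.
Qed.

Lemma sum_hits i t :
  \sum_a (hits i t a)%:R = #|[set j | sigma j t]|%:R :> R.
Proof.
rewrite -(pair_bigA _ (fun u j => (hits i t (u, j))%:R)) /= (bigD1 i) //=.
rewrite [X in _ + X]big1 ?addr0; last first.
  by move=> u ui; rewrite big1 // => j _; rewrite /hits /= (negbTE ui).
rewrite -sum1dep_card natr_sum [RHS]big_mkcond /=; apply: eq_bigr => j _.
by rewrite /hits /= eqxx; case: (sigma j t).
Qed.

Lemma expect_prod_kept i l k : (k <= T)%N ->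
  expect R (fun w => \prod_(l <= s < k) kept w i s) = \prod_(l <= s < k) stay_prob s.
Proof.
move=> kT.
rewrite (eq_expect (fun w => big_nat_insub _ (fun t => (~~ hits i t (w t))%:R) l kT)).
rewrite (expect_prod N_gt0 Nsub_gt0 _ (fun t a => (~~ hits i t a)%:R)).
rewrite /stay_prob big_nat_insub //; apply: eq_bigr => t _.
have -> : \sum_a (~~ hits i t a)%:R = \sum_(a : 'I_N * 'I_Nsub) (1 - (hits i t a)%:R) :> R.
  by apply: eq_bigr => a _; case: hits; rewrite ?subrr ?subr0.
rewrite sumrB sum_hits sumr_const card_prod !card_ord /stay mulrBl divff //.
by rewrite pnatr_eq0 -lt0n muln_gt0 N_gt0.
Qed.

Lemma expect_age i k : (k <= T)%N ->
  expect R (fun w : outcome N Nsub T => (age sigma w i k)%:R) =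
  1 + \sum_(l < k) \prod_(l <= s < k) stay_prob s.
Proof.
move=> kT; rewrite (eq_expect (fun w => age_kept w i k)) expectD expect_cst // expect_sum.
by congr (_ + _); apply: eq_bigr => l _; exact: expect_prod_kept.
Qed.

Lemma avg_age_stay_prob :
  avg_age R N sigma = T%:R^-1 * (T%:R + interval_prod_sum T.-1 stay_prob).
Proof.
rewrite /avg_age; congr (_ * _).
rewrite (eq_bigr (fun k : 'I_T => 1 + \sum_(l < k) \prod_(l <= s < k) stay_prob s)).
  rewrite big_split /= sumr_const card_ord; congr (_ + _).
  have [->|T_gt0] := posnP T; first by rewrite /interval_prod_sum big_ord1 !big_ord0.
  by rewrite /interval_prod_sum prednK.
move=> k _; under eq_bigr => i _ do rewrite expect_age 1?ltnW //.
rewrite sumr_const card_ord; set c := 1 + _.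
by rewrite -[c *+ N]mulr_natl mulKf // pnatr_eq0 -lt0n.
Qed.

Definition blocked (s : nat) : bool :=
  oapp (fun t => [exists j, ~~ sigma j t]) false (insub s).

Lemma stay_prob_profile s :
  (forall t : 'I_T, (#|[set j | ~~ sigma j t]| <= 1)%N) -> (s < T)%N ->
  stay_prob s = profile (stay Nsub) (stay Nsub.-1) blocked s.
Proof.
move=> one sT; rewrite /stay_prob /profile /blocked (insubT (fun s => s < T)%N sT) /=.
set t : 'I_T := Sub s sT.
have -> : #|[set j | sigma j t]| = (Nsub - #|[set j | ~~ sigma j t]|)%N.
  have := cardsC [set j | sigma j t]; rewrite card_ord.
  have -> : ~: [set j | sigma j t] = [set j | ~~ sigma j t].
    by apply/setP => j; rewrite !inE.
  lia.
have -> : [exists j, ~~ sigma j t] = (0 < #|[set j | ~~ sigma j t]|)%N.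
  rewrite card_gt0; apply/existsP/set0Pn => -[j nj]; exists j; by rewrite inE in nj *.
by have := one t; case: #|_| => [|[|]] //= _; rewrite ?subn0 ?subn1.
Qed.

Lemma avg_age_profile :
  (forall t : 'I_T, (#|[set j | ~~ sigma j t]| <= 1)%N) ->
  avg_age R N sigma = T%:R^-1 *
    (T%:R + interval_prod_sum T.-1 (profile (stay Nsub) (stay Nsub.-1) blocked)).
Proof.
move=> one; rewrite avg_age_stay_prob; congr (_ * (_ + _)).
by apply: eq_interval_prod_sum => s sT; apply: stay_prob_profile => //; lia.
Qed.

Lemma nblockedE : nblocked sigma = (\sum_(t < T) #|[set j | ~~ sigma j t]|)%N.
Proof.
rewrite /nblocked -sum1dep_card big_mkcond /=.
rewrite -(pair_bigA _ (fun j t => if ~~ sigma j t then 1 else 0)%N) exchange_big /=.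
by apply: eq_bigr => t _; rewrite -sum1dep_card [RHS]big_mkcond.
Qed.

Lemma weight_blocked_le n :
  (n <= T)%N -> (weight n (fun=> 1%N) blocked <= nblocked sigma)%N.
Proof.
move=> nT; rewrite nblockedE /weight (big_ord_widen T (fun s => blocked s * 1)%N nT).
rewrite big_mkcond /=; apply: leq_sum => t _; rewrite /blocked valK /= muln1.
case: ifP => // _; case: existsP => // -[j nj].
by rewrite card_gt0; apply/set0Pn; exists j; rewrite inE.
Qed.

End AverageAge.

Section BlockInterval.
Variables (Nsub T : nat) (j0 : 'I_Nsub) (t0 K : nat).
Hypothesis t0K_le_T : (t0 + K <= T)%N.

Definition block_interval : 'M[bool]_(Nsub, T) :=
  \matrix_(j, t) ~~ ((j == j0) && (t0 <= t < t0 + K)%N).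

Lemma card_blocked_at_block_interval t :
  #|[set j | ~~ block_interval j t]| = (t0 <= t < t0 + K)%N.
Proof.
have -> : [set j | ~~ block_interval j t] = if (t0 <= t < t0 + K)%N then [set j0] else set0.
  by apply/setP => j; rewrite !inE mxE negbK; case: ifP; rewrite ?inE ?andbT ?andbF.
by case: ifP; rewrite ?cards1 ?cards0.
Qed.

Lemma feasible_block_interval (R : realFieldType) (alpha : R) :
  alpha * T%:R = K%:R -> feasible alpha block_interval.
Proof.
move=> aK; split => [|t]; last by rewrite card_blocked_at_block_interval; case: (_ && _).
rewrite aK ler_nat nblockedE.
rewrite (eq_bigr (fun t : 'I_T => (t0 <= t < t0 + K)%N * 1)%N) => [|t _]; last first.
  by rewrite card_blocked_at_block_interval muln1.
rewrite -/(weight T (fun=> 1%N) (fun s => t0 <= s < t0 + K)%N).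
by rewrite weight_interval ?addKn //; lia.
Qed.

Lemma blocked_block_interval : blocked block_interval =1 (fun s => t0 <= s < t0 + K)%N.
Proof.
move=> s; rewrite /blocked; case: insubP => [t _ <- /=|]; last by rewrite -leqNgt /=; lia.
apply/existsP/idP => [[j]|inK]; first by rewrite mxE negbK => /andP[].
by exists j0; rewrite mxE eqxx inK.
Qed.

Lemma consecutive_block_interval : consecutive_block block_interval K.
Proof. by exists j0, t0; split => // j t; rewrite mxE. Qed.

End BlockInterval.

Theorem theorem8 (R : realFieldType) (N Nsub T : nat) (alpha : R) (K : nat)
  (hN : (0 < N)%N) (hNsub : (2 <= Nsub)%N)
  (halpha0 : 0 < alpha) (halpha1 : alpha < 1)
  (hK : alpha * T%:R = K%:R) :
  exists sigma : 'M[bool]_(Nsub, T),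
    [/\ feasible alpha sigma,
        consecutive_block sigma K &
        forall sigma' : 'M[bool]_(Nsub, T),
          feasible alpha sigma' ->
          avg_age R N sigma' <= avg_age R N sigma].
Proof.
have Nsub_gt0 : (0 < Nsub)%N by lia.
have K_le_T : (K <= T)%N by rewrite -(ler_nat R) -hK ler_piMl // ltW.
set x := stay R N Nsub Nsub; set y := stay R N Nsub Nsub.-1.
have xy : 0 <= x <= y by apply: stay_ge0_le => //; rewrite leq_pred leq_pmull.
pose d t := profile x y (fun s => t <= s < t + K)%N.
pose F t := interval_prod_sum T.-1 (d t).
have [t0 _ t0_max] := @arg_maxP _ _ 'I_(T - K).+1 ord0 xpredT (fun t => F t) isT.
have t0K : (t0 + K <= T)%N by have := ltn_ord t0; lia.
pose sigma := block_interval T (Ordinal Nsub_gt0) t0 K.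
have [nb one] : feasible alpha sigma by exact: feasible_block_interval.
exists sigma; split => [//||sigma' [nb' one']]; first exact: consecutive_block_interval.
rewrite !avg_age_profile //; apply: ler_wpM2l; first by rewrite invr_ge0.
rewrite lerD2l [X in _ <= X](@eq_interval_prod_sum _ _ _ (d t0)).
  have [q [r [qrn qr dom]]] :=
    interval_prod_sum_interval_dominates xy T.-1 (blocked sigma').
  have rqK : (r - q <= K)%N.
    apply: leq_trans qr (leq_trans (weight_blocked_le _ (leq_pred T)) _).
    by rewrite -(ler_nat R) -hK.
  pose t1 : 'I_(T - K).+1 := inord (minn q (T - K)).
  apply: (le_trans dom); apply: le_trans (t0_max t1 isT).
  by apply: (ler_interval_prod_sum_profile xy) => s /=; rewrite /t1 inordK; lia.
by move=> s _; rewrite /profile blocked_block_interval.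
Qed.
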